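(* Let $G$ be a simple loopless graph on $[L]$ and $p\ge1$. For each $v\in[L]$ let $|c^*(v)|$ denote the size of the largest clique in $G$ containing $v$. For any Dyck path $\varepsilon\in D_{2p}$ and any labelling $i=(i_k)_{k\in\varepsilon^\uparrow}\in[L]^{\varepsilon^\uparrow}$, \[ |\mathcal{P}^{(\varepsilon)}_{2p}(G,i)|\le\min\Big\{\prod_{k\in\varepsilon^\uparrow}|c^*(i_k)|,\ p!\Big\}. \] In particular, $|\mathcal{P}^{(\varepsilon)}_{2p}(G,i)|\le\min(\omega(G)^p,p!)$, where $\omega(G)$ is the clique number of $G$.
   Context: $\mathcal{T}(G)=\langle v\in[L]: uv=vu \text{ for } (u,v)\in E(G)\rangle$ is the trace monoid of $G$ (words in letters $[L]$ modulo commutation of adjacent letters), $e$ the empty word, $|w|$ the length of $w$. Words are adjacent, $w_1\leftrightarrow w_2$, if $w_1=vw_2$ or $w_2=vw_1$ for a letter $v\in[L]$. $\mathcal{P}_{2p}(G)=\{w\in\mathcal{T}(G)^{2p}: e\leftrightarrow w_1\leftrightarrow\cdots\leftrightarrow w_{2p}=e\}$. $D_{2p}$ is the set of Dyck paths $\varepsilon\in\{+1,-1\}^{2p}$ (all partial sums nonnegative, total sum zero); $\varepsilon^\uparrow=\{k:\varepsilon_k=+1\}$. For $w\in\mathcal{P}_{2p}(G)$, with $w_0:=e$, define $\varepsilon(w)_k=+1$ if $|w_k|>|w_{k-1}|$ and $-1$ otherwise; this is a Dyck path. $\mathcal{P}^{(\varepsilon)}_{2p}(G)=\{w\in\mathcal{P}_{2p}(G):\varepsilon(w)=\varepsilon\}$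 and, for $i\in[L]^{\varepsilon^\uparrow}$, $\mathcal{P}^{(\varepsilon)}_{2p}(G,i)=\{w\in\mathcal{P}^{(\varepsilon)}_{2p}(G): w_k=i_kw_{k-1}\text{ for all }k\in\varepsilon^\uparrow\}$. *)

From mathcomp Require Import all_boot.
Set Implicit Arguments. Unset Strict Implicit. Unset Printing Implicit Defensive.

Section Trace.
Variables (L : nat) (G : rel 'I_L).

(* Words are sequences of letters in [L] = 'I_L (left letter = first letter).
   One commutation step: swap two adjacent letters a b with (a,b) an edge. *)
Definition tstep (w1 w2 : seq 'I_L) : Prop :=
  exists (x y : seq 'I_L) (a b : 'I_L),
    w1 = x ++ a :: b :: y /\ w2 = x ++ b :: a :: y /\ G a b.

(* Equality in the trace monoid T(G): reflexive-transitive closure of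
   commutation steps (an equivalence when G is symmetric). *)
Inductive trace_eq : seq 'I_L -> seq 'I_L -> Prop :=
| trace_eq_refl w : trace_eq w w
| trace_eq_step w1 w2 w3 : tstep w1 w2 -> trace_eq w2 w3 -> trace_eq w1 w3.

Definition tadj (w1 w2 : seq 'I_L) : Prop :=
  exists v : 'I_L, trace_eq w1 (v :: w2) \/ trace_eq w2 (v :: w1).

(* Dyck paths of length 2p, encoded as eps : seq bool of size 2p,
   where eps_k = +1 iff nth false eps (k-1) = true  (k = 1..2p). *)
Definition dyck (p : nat) (eps : seq bool) : Prop :=
  size eps = p.*2 /\
  (forall j, j <= p.*2 -> count negb (take j eps) <= count id (take j eps)) /\
  count id eps = count negb eps.

Definition eps_at (eps : seq bool) (k : nat) : bool := nth false eps k.-1.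

(* w : nat -> seq 'I_L represents (w_0, ..., w_{2p}); only k <= 2p matter.
   Membership in P^{(eps)}_{2p}(G, i); i : nat -> 'I_L, only its values at
   up-steps k (eps_k = +1) matter. *)
Definition in_Peps (p : nat) (eps : seq bool) (i : nat -> 'I_L)
    (w : nat -> seq 'I_L) : Prop :=
  trace_eq (w 0) [::] /\ trace_eq (w p.*2) [::] /\
  (forall k, 1 <= k <= p.*2 -> tadj (w k.-1) (w k)) /\
  (forall k, 1 <= k <= p.*2 -> (size (w k.-1) < size (w k)) = eps_at eps k) /\
  (forall k, 1 <= k <= p.*2 -> eps_at eps k -> trace_eq (w k) (i k :: w k.-1)).

Definition path_eq (p : nat) (w w' : nat -> seq 'I_L) : Prop :=
  forall k, k <= p.*2 -> trace_eq (w k) (w' k).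

Definition distinct_paths_in (p : nat) (eps : seq bool) (i : nat -> 'I_L)
    (ws : seq (nat -> seq 'I_L)) : Prop :=
  (forall a, a < size ws -> in_Peps p eps i (nth (fun _ => [::]) ws a)) /\
  (forall a b, a < size ws -> b < size ws -> a != b ->
     ~ path_eq p (nth (fun _ => [::]) ws a) (nth (fun _ => [::]) ws b)).

Definition clique (S : {set 'I_L}) : bool :=
  [forall u in S, forall v in S, (u != v) ==> G u v].

Definition cstar (v : 'I_L) : nat :=
  \max_(S : {set 'I_L} | clique S && (v \in S)) #|S|.

Definition clique_number : nat := \max_(S : {set 'I_L} | clique S) #|S|.

End Trace.

From mathcomp Require Import all_boot boolp.
Set Implicit Arguments. Unset Strict Implicit. Unset Printing Implicit Defensive.

(* Count the paths backwards in time.  At an up-step the next word is forced;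
   at a down-step w_(k-1) = v w_k, and the letters v that can start a fixed
   trace t pairwise commute (Levi's lemma), so they form a clique C of letters
   of t, and the branch of v continues from the trace t with v removed.  Hence
   any weight f with f (i_(k+1) t) (k+1) <= f t k at up-steps and
   \sum_(v in C) f (t - v) (k+1) <= f t k at down-steps bounds the number of
   paths from state t at time k.  Both the product of |c*(x)| over the letters
   of t and the remaining up-labels, and (|t| + number of remaining up-steps)!,
   i.e. the factorial of the number of remaining down-steps, are such weights,
   because |C| <= |c*(v)| and |C| <= |t| for v in C. *)

Lemma rem_cat (T : eqType) (v : T) s1 s2 :
  rem v (s1 ++ s2) = if v \in s1 then rem v s1 ++ s2 else s1 ++ rem v s2.
Proof.
elim: s1 => //= x s1 IH; rewrite in_cons eq_sym.
by case: eqP => //= _; rewrite IH; case: (v \in s1).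
Qed.

Section TraceEquality.
Variables (L : nat) (G : rel 'I_L).
Implicit Types (a b c s t : seq 'I_L).

Lemma trace_eq_trans a b c : trace_eq G a b -> trace_eq G b c -> trace_eq G a c.
Proof. by elim=> // w1 w2 w3 st _ IH /IH; apply: trace_eq_step. Qed.

Lemma trace_eq_homo (F : seq 'I_L -> seq 'I_L) :
  (forall a b, tstep G a b -> trace_eq G (F a) (F b)) ->
  forall a b, trace_eq G a b -> trace_eq G (F a) (F b).
Proof.
move=> Fstep a b; elim=> [w|w1 w2 w3 /Fstep st _]; first exact: trace_eq_refl.
exact: trace_eq_trans.
Qed.

Lemma trace_eq_cons v a b : trace_eq G a b -> trace_eq G (v :: a) (v :: b).
Proof.
apply: trace_eq_homo => _ _ [x [y [c [d [-> [-> Gcd]]]]]].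
by apply: trace_eq_step (trace_eq_refl _ _); exists (v :: x), y, c, d.
Qed.

Lemma trace_eq_perm a b : trace_eq G a b -> perm_eq a b.
Proof.
elim=> [w|w1 w2 w3 [x [y [c [d [-> [-> _]]]]]] _]; first exact: perm_refl.
apply: perm_trans; rewrite perm_cat2l; apply/permP => q /=; by rewrite addnCA.
Qed.

Lemma trace_eq_size a b : trace_eq G a b -> size a = size b.
Proof. by move/trace_eq_perm/perm_size. Qed.

Lemma trace_eq_mem v a b : trace_eq G a b -> (v \in a) = (v \in b).
Proof. by move/trace_eq_perm/perm_mem. Qed.

Lemma trace_eq_filter (q : pred 'I_L) a b :
  (forall x y, q x -> q y -> ~~ G x y) ->
  trace_eq G a b -> filter q a = filter q b.
Proof.
move=> qfree; elim=> // w1 w2 w3 [x [y [c [d [-> [-> Gcd]]]]]] _ <-.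
rewrite !filter_cat /=; congr (_ ++ _).
case qc: (q c); case qd: (q d) => //.
by move: (qfree c d qc qd); rewrite Gcd.
Qed.

Hypothesis Gsym : symmetric G.

Lemma trace_eq_sym a b : trace_eq G a b -> trace_eq G b a.
Proof.
elim=> [w|w1 w2 w3 [x [y [c [d [-> [-> Gcd]]]]]] _ IH]; first exact: trace_eq_refl.
apply: trace_eq_trans IH (trace_eq_step _ (trace_eq_refl _ _)).
by exists x, y, d, c; rewrite Gsym.
Qed.

Hypothesis Girr : irreflexive G.

Lemma trace_eq_rem v a b : trace_eq G a b -> trace_eq G (rem v a) (rem v b).
Proof.
apply: trace_eq_homo => _ _ [x [y [c [d [-> [-> Gcd]]]]]].
have neq_cd : c != d by apply: contraTneq Gcd => ->; rewrite Girr.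
rewrite !rem_cat; case: ifP => _.
  by apply: trace_eq_step (trace_eq_refl _ _); exists (rem v x), y, c, d.
rewrite /=; case: (eqVneq c v) => [<-|_].
  by rewrite eq_sym (negbTE neq_cd); apply: trace_eq_refl.
case: (eqVneq d v) => [_|_]; first exact: trace_eq_refl.
by apply: trace_eq_step (trace_eq_refl _ _); exists x, (rem v y), c, d.
Qed.

Lemma trace_eq_consK v a b : trace_eq G (v :: a) (v :: b) -> trace_eq G a b.
Proof. by move/(trace_eq_rem v); rewrite /= eqxx. Qed.

(* Projecting onto the independent set {u, v} is a trace invariant. *)
Lemma trace_eq_heads u v a b :
  trace_eq G (u :: a) (v :: b) -> u != v -> G u v.
Proof.
move=> eq_uv neq_uv; apply: contraNT neq_uv => nGuv.
have free : forall x y, pred2 u v x -> pred2 u v y -> ~~ G x y.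
  move=> x y /pred2P[]-> /pred2P[]->; by rewrite ?Girr // Gsym.
by move: (trace_eq_filter free eq_uv); rewrite /= !eqxx orbT => -[->].
Qed.

Definition heads t : {set 'I_L} := [set v | `[< exists s, trace_eq G t (v :: s) >]].

Lemma headsP v t : reflect (exists s, trace_eq G t (v :: s)) (v \in heads t).
Proof. by rewrite inE; apply: asboolP. Qed.

Lemma heads_sub t : {subset heads t <= t}.
Proof. by move=> v /headsP[s /trace_eq_mem ->]; rewrite mem_head. Qed.

Lemma clique_heads t : clique G (heads t).
Proof.
apply/forallP => u; apply/implyP => /headsP[a ha].
apply/forallP => v; apply/implyP => /headsP[b hb].
by apply/implyP; apply: trace_eq_heads; apply: trace_eq_trans (trace_eq_sym ha) hb.
Qed.

End TraceEquality.

Lemma leq_sum_card_mul (I : finType) (C : {set I}) (F : I -> nat) M :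
  (forall v, v \in C -> #|C| * F v <= M) -> \sum_(v in C) F v <= M.
Proof.
move=> le_F; have [/card0_eq C0|C_gt0] := posnP #|C|; first by rewrite big_pred0.
rewrite -(leq_pmul2l C_gt0) big_distrr /=.
by rewrite -sum_nat_const; apply: leq_sum.
Qed.

Section CliqueSizes.
Variables (L : nat) (G : rel 'I_L).

Lemma cstar_ge_card (C : {set 'I_L}) v : clique G C -> v \in C -> #|C| <= cstar G v.
Proof.
by move=> cC vC; apply: (leq_bigmax_cond (P := fun S => clique G S && (v \in S))); rewrite cC.
Qed.

Lemma clique1 v : clique G [set v].
Proof.
apply/forallP => x; apply/implyP => /set1P->.
by apply/forallP => y; apply/implyP => /set1P->; rewrite eqxx.
Qed.

Lemma cstar_gt0 v : 0 < cstar G v.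
Proof. by rewrite -(cards1 v) cstar_ge_card ?clique1 ?set11. Qed.

Lemma cstar_le_clique_number v : cstar G v <= clique_number G.
Proof. by apply/bigmax_leqP => S /andP[cS _]; apply: (leq_bigmax_cond (P := clique G)). Qed.

End CliqueSizes.

Section PathFamilies.
Variables (L : nat) (G : rel 'I_L) (n : nat) (eps : seq bool) (i : nat -> 'I_L).
Hypotheses (Gsym : symmetric G) (Girr : irreflexive G).
Implicit Types (t : seq 'I_L) (w : nat -> seq 'I_L) (ws : seq (nat -> seq 'I_L)).

Definition step_ok w j :=
  [/\ tadj G (w j.-1) (w j), (size (w j.-1) < size (w j)) = eps_at eps j
    & eps_at eps j -> trace_eq G (w j) (i j :: w j.-1)].

Definition path_from k w := forall j, k < j <= n -> step_ok w j.

Definition agree_from k w1 w2 := forall j, k <= j <= n -> trace_eq G (w1 j) (w2 j).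

Definition family k t ws :=
  all (fun w => `[< path_from k w /\ trace_eq G (w k) t >]) ws /\
  pairwise (fun w1 w2 => `[< ~ agree_from k w1 w2 >]) ws.

Lemma family_filter k t ws (P : pred (nat -> seq 'I_L)) :
  family k t ws -> family k t (filter P ws).
Proof.
case=> all_ws pw_ws; split; last exact: pairwise_filter.
by rewrite all_filter; apply: sub_all all_ws => w w_fam; apply/implyP.
Qed.

Lemma family_next k t t' ws : family k t ws ->
  all (fun w => `[< trace_eq G (w k.+1) t' >]) ws -> family k.+1 t' ws.
Proof.
case=> all_ws pw_ws all_t'; split.
  move: (conj all_ws all_t') => /andP; rewrite -all_predI; apply: sub_all.
  move=> w /andP[/asboolP[w_path _] /asboolP w_t']; apply/asboolP.
  by split=> // j /andP[kj jn]; apply: w_path; rewrite jn andbT ltnW.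
move: all_ws pw_ws; apply: sub_in_pairwise => w1 w2 /asboolP[_ w1_t] /asboolP[_ w2_t].
move=> /asboolP w12; apply/asboolP => agree12; apply: w12 => j /andP[kj jn].
have [->|neq_jk] := eqVneq j k.
  exact: trace_eq_trans w1_t (trace_eq_sym Gsym w2_t).
by apply: agree12; rewrite jn ltn_neqAle eq_sym neq_jk kj.
Qed.

Lemma family_last t ws : family n t ws -> size ws <= 1.
Proof.
case: ws => [|w1 [|w2 ws]] // [/and3P[/asboolP[_ w1_t] /asboolP[_ w2_t] _]].
move=> /= /andP[/andP[/asboolP w12 _] _]; exfalso; apply: w12 => j /andP[nj jn].
have -> : j = n by apply/eqP; rewrite eqn_leq jn.
exact: trace_eq_trans w1_t (trace_eq_sym Gsym w2_t).
Qed.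

Lemma family_up k t ws : k < n -> eps_at eps k.+1 ->
  family k t ws -> family k.+1 (i k.+1 :: t) ws.
Proof.
move=> kn up fam; apply: (family_next fam); apply: sub_all fam.1 => w.
move=> /asboolP[w_path w_t]; apply/asboolP.
have [_ _ /(_ up) w_up] : step_ok w k.+1 by apply: w_path; rewrite ltnSn.
exact: trace_eq_trans w_up (trace_eq_cons _ w_t).
Qed.

Definition branch k v ws := [seq w <- ws | `[< trace_eq G (w k) (v :: w k.+1) >]].

Lemma family_branch k t v ws : family k t ws -> family k.+1 (rem v t) (branch k v ws).
Proof.
move=> fam; apply: (family_next (family_filter _ fam)).
rewrite all_filter; apply: sub_all fam.1 => w /asboolP[_ w_t].
apply/implyP => /asboolP w_v; apply/asboolP; apply: trace_eq_sym => //.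
have /(trace_eq_rem Girr v) : trace_eq G t (v :: w k.+1).
  exact: trace_eq_trans (trace_eq_sym Gsym w_t) w_v.
by rewrite /= eqxx.
Qed.

Lemma branch_heads k t v ws : family k t ws -> branch k v ws != [::] -> v \in heads G t.
Proof.
case=> + _; elim: ws => //= w ws IH /andP[/asboolP[_ w_t] all_ws].
case: asboolP => [w_v _|_]; last exact: IH.
by apply/headsP; exists (w k.+1); apply: trace_eq_trans (trace_eq_sym Gsym w_t) w_v.
Qed.

Lemma size_le_sum_filter (T : Type) (I : finType) (P : I -> pred T) s :
  all (fun x => [exists v, P v x]) s -> size s <= \sum_v size (filter (P v) s).
Proof.
elim: s => [|x s IH] //= /andP[/existsP[v Pvx] /IH le_s].
rewrite (eq_bigr (fun u => P u x + size (filter (P u) s))); last by move=> u _; case: (P u x).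
by rewrite big_split /= -add1n leq_add // (bigD1 v) //= Pvx.
Qed.

Lemma size_le_sum_branch k t ws : k < n -> ~~ eps_at eps k.+1 ->
  family k t ws -> size ws <= \sum_v size (branch k v ws).
Proof.
move=> kn down fam; apply: size_le_sum_filter; apply: sub_all fam.1 => w.
move=> /asboolP[w_path _].
have [[v [w_v|w_v]] w_size _] : step_ok w k.+1 by apply: w_path; rewrite ltnSn.
  by apply/existsP; exists v; apply/asboolP.
by move: w_size; rewrite /= (negbTE down) (trace_eq_size w_v) ltnSn.
Qed.

Section Potential.
Variable f : seq 'I_L -> nat -> nat.
Hypothesis f_end_gt0 : forall t, 0 < f t n.
Hypothesis f_up : forall k t, k < n -> eps_at eps k.+1 -> f (i k.+1 :: t) k.+1 <= f t k.
Hypothesis f_down : forall k t (C : {set 'I_L}), k < n -> ~~ eps_at eps k.+1 ->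
  clique G C -> {subset C <= t} -> \sum_(v in C) f (rem v t) k.+1 <= f t k.

Lemma family_size_le k t ws : k <= n -> family k t ws -> size ws <= f t k.
Proof.
move/subnKC; move: (n - k) => m; elim: m k t ws => [|m IH] k t ws km fam.
  have k_n : k = n by rewrite -km addn0.
  by rewrite k_n in fam *; apply: leq_trans (family_last fam) (f_end_gt0 t).
have kn : k < n by rewrite -km addnS ltnS leq_addr.
have km' : k.+1 + m = n by rewrite addSnnS.
have [up|down] := boolP (eps_at eps k.+1).
  exact: leq_trans (IH _ _ _ km' (family_up kn up fam)) (f_up t kn up).
apply: leq_trans (size_le_sum_branch kn down fam) _.
apply: leq_trans (f_down kn down (clique_heads Gsym Girr t) (@heads_sub _ G t)).
rewrite [X in _ <= X]big_mkcond /=; apply: leq_sum => v _; case: ifPn => [_|not_head].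
  exact: IH km' (family_branch v fam).
by rewrite leqn0 size_eq0; apply: contraNT not_head; apply: branch_heads fam.
Qed.

End Potential.

Definition clique_weight t k :=
  \prod_(x <- t) cstar G x * \prod_(k.+1 <= j < n.+1 | eps_at eps j) cstar G (i j).

Lemma family_size_le_clique_weight t ws :
  family 0 t ws -> size ws <= clique_weight t 0.
Proof.
apply: family_size_le => // [t'|k t' kn up|k t' C kn down clique_C sub_C].
- by rewrite muln_gt0 !prodn_gt0 // => *; apply: cstar_gt0.
- by rewrite /clique_weight big_cons (big_ltn_cond _ (m := k.+1)) ?ltnS // up mulnCA mulnA.
rewrite /clique_weight (big_ltn_cond _ (m := k.+1)) ?ltnS // (negbTE down).
apply: leq_sum_card_mul => v vC; rewrite mulnA leq_mul2r; apply/orP; right.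
rewrite (perm_big _ (perm_to_rem (sub_C v vC))) big_cons leq_mul2r.
by rewrite cstar_ge_card ?orbT.
Qed.

Definition factorial_weight t k := (size t + count id (drop k eps))`!.

Hypothesis eps_size : size eps = n.

Lemma family_size_le_factorial_weight t ws :
  family 0 t ws -> size ws <= factorial_weight t 0.
Proof.
apply: family_size_le => // [t'|k t' kn up|k t' C kn down _ sub_C].
- exact: fact_gt0.
- rewrite /factorial_weight (drop_nth false (n := k)) ?eps_size //=.
  by rewrite -/(eps_at eps k.+1) up addSnnS.
rewrite /factorial_weight (drop_nth false (n := k)) ?eps_size //=.
rewrite -/(eps_at eps k.+1) (negbTE down) add0n.
apply: leq_sum_card_mul => v vC; rewrite size_rem ?sub_C //.
have C_le : #|C| <= size t'.
  by apply: leq_trans (card_size t'); apply: subset_leq_card; apply/subsetP => x /sub_C.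
case: (size t') C_le => [|s] C_le /=; first by rewrite leqn0 in C_le; rewrite (eqP C_le).
by rewrite addSn factS leq_mul2r (leq_trans C_le) ?orbT // ltnS leq_addr.
Qed.

End PathFamilies.

Lemma distinct_paths_family L (G : rel 'I_L) p eps i ws :
  distinct_paths_in G p eps i ws -> family G p.*2 eps i 0 [::] ws.
Proof.
case=> paths distinct; split.
  apply/(all_nthP (fun _ => [::])) => a lt_a; apply/asboolP.
  have [w0 [_ [w_adj [w_size w_up]]]] := paths a lt_a.
  by split=> // j j_range; split; [apply: w_adj|apply: w_size|apply: w_up].
apply/(pairwiseP (fun _ => [::])) => a b lt_a lt_b ab; apply/asboolP => agree_ab.
by apply: (distinct a b lt_a lt_b (negbT (ltn_eqF ab))) => j jn; apply: agree_ab.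
Qed.

Lemma dyck_count_up p eps : dyck p eps -> count id eps = p.
Proof.
case=> size_eps [_ balanced].
have : count id eps + count negb eps = p.*2 by rewrite -size_eps; apply: count_predC.
by rewrite -balanced addnn => /double_inj.
Qed.

Lemma count_eps_at eps : count (eps_at eps) (index_iota 1 (size eps).+1) = count id eps.
Proof.
rewrite /index_iota subSS subn0 -[1]/(1 + 0) iotaDl count_map.
rewrite -[X in _ = count _ X](mkseq_nth false eps) count_map.
by apply: eq_count => k; rewrite /= /eps_at add1n.
Qed.

Lemma prod_cstar_le L (G : rel 'I_L) eps (i : nat -> 'I_L) :
  \prod_(1 <= k < (size eps).+1 | eps_at eps k) cstar G (i k) <= clique_number G ^ count id eps.
Proof.
rewrite -count_eps_at -iter_muln_1 -big_const_seq.
by apply: leq_prod => k _; apply: cstar_le_clique_number.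
Qed.

Theorem proposition4p1 (L : nat) (G : rel 'I_L)
  (Gsym : symmetric G) (Girr : irreflexive G)
  (p : nat) (hp : 1 <= p) (eps : seq bool) (heps : dyck p eps)
  (i : nat -> 'I_L) (ws : seq (nat -> seq 'I_L))
  (hws : distinct_paths_in G p eps i ws) :
  size ws <= minn (\prod_(1 <= k < p.*2.+1 | eps_at eps k) cstar G (i k)) p`! /\
  size ws <= minn (clique_number G ^ p) p`!.
Proof.
have [size_eps _] := heps; have ups := dyck_count_up heps.
have fam := distinct_paths_family hws.
have le_clique := family_size_le_clique_weight Gsym Girr fam.
have le_fact := family_size_le_factorial_weight Gsym Girr size_eps fam.
rewrite /clique_weight big_nil mul1n in le_clique.
rewrite /factorial_weight drop0 ups in le_fact.
have le_omega := prod_cstar_le G eps i; rewrite size_eps ups in le_omega.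
by rewrite !leq_min le_clique le_fact (leq_trans le_clique le_omega).
Qed.
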